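(* Let $a<b$ be real numbers and let $f:[a,b]\to\mathbb{R}$ be continuous on $[a,b]$ and differentiable on $(a,b)$. If $c,\xi_c$ satisfy $a<\xi_c<c<b$ and $f'(\xi_c)=\frac{f(c)-f(a)}{c-a}$, then there exists $\xi_b\in[\xi_c,b)$ such that $f'(\xi_b)=\frac{f(b)-f(a)}{b-a}$. *)

From Stdlib Require Import Reals.
Open Scope R_scope.

Definition continuous_on_closed (f : R -> R) (a b : R) : Prop :=
  forall x0, a <= x0 <= b ->
    limit1_in f (fun x => a <= x <= b) (f x0) x0.

(* With m the slope of the chord over [a,b], put g x = f x - m x, so that g a = g b and
   g' = f' - m.  Say f'(xi_c) < m (the other case follows by replacing f with -f).  Then
   g c - g b = (c - a) g'(xi_c) < 0, and by continuity g c < g w for some w in (c,b).  On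
   [xi_c, w] the minimum of g is attained neither at w (g c is smaller) nor at xi_c (g
   decreases to the right of xi_c, since g'(xi_c) < 0), so it is attained at an interior
   point, where g' vanishes by Fermat's theorem. *)

From Stdlib Require Import Reals Lra.
Open Scope R_scope.

Lemma derivable_pt_lim_neg_right (g : R -> R) (x l q : R) :
  derivable_pt_lim g x l -> l < 0 -> x < q ->
  exists y, x < y < q /\ g y < g x.
Proof.
  intros Hg Hl Hxq.
  destruct (Hg (- l) ltac:(lra)) as [delta Hdelta].
  pose proof (cond_pos delta) as Hdelta_pos.
  set (h := Rmin (delta / 2) ((q - x) / 2)).
  assert (Hh_delta : h <= delta / 2) by apply Rmin_l.
  assert (Hh_q : h <= (q - x) / 2) by apply Rmin_r.
  assert (Hh_pos : 0 < h) by (apply Rmin_pos; lra).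
  assert (Habs_h : Rabs h < delta) by (rewrite Rabs_right; lra).
  specialize (Hdelta h ltac:(lra) Habs_h).
  apply Rabs_def2 in Hdelta.
  assert (Hquot : (g (x + h) - g x) / h < 0) by lra.
  exists (x + h); split; [lra |].
  assert (Hdiff : g (x + h) - g x < 0).
  { replace (g (x + h) - g x) with ((g (x + h) - g x) / h * h) by (field; lra).
    nra. }
  lra.
Qed.

Lemma deriv_zero_of_interior_dip (g g' : R -> R) (p q z : R) :
  p < z < q ->
  (forall x, p <= x <= q -> derivable_pt_lim g x (g' x)) ->
  g' p < 0 -> g z < g q ->
  exists x, p < x < q /\ g' x = 0.
Proof.
  intros Hz Hg Hg'p Hzq.
  assert (Hcont : forall x, p <= x <= q -> continuity_pt g x).
  { intros x Hx. apply derivable_continuous_pt. exists (g' x). now apply Hg. }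
  destruct (continuity_ab_min g p q ltac:(lra) Hcont) as [x [Hmin Hx]].
  assert (Hx_q : x < q).
  { destruct (Rle_lt_or_eq_dec x q ltac:(lra)) as [Hlt | ->]; [exact Hlt |].
    specialize (Hmin z ltac:(lra)). lra. }
  assert (Hp_x : p < x).
  { destruct (Rle_lt_or_eq_dec p x ltac:(lra)) as [Hlt | <-]; [exact Hlt |].
    destruct (derivable_pt_lim_neg_right g p (g' p) q) as [y [Hy Hgy]];
      [now apply Hg | exact Hg'p | lra |].
    specialize (Hmin y ltac:(lra)). lra. }
  exists x; split; [lra |].
  assert (Hder : derivable_pt_lim g x (g' x)) by (apply Hg; lra).
  rewrite <- (derive_pt_eq_0 g x (g' x) (exist _ (g' x) Hder) Hder).
  apply (deriv_minimum g p q); [exact Hp_x | exact Hx_q |].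
  intros y Hpy Hyq. apply Hmin. lra.
Qed.

Lemma continuous_on_closed_opp (f : R -> R) (a b : R) :
  continuous_on_closed f a b -> continuous_on_closed (fun x => - f x) a b.
Proof. intros Hf x Hx. apply limit_Ropp. now apply Hf. Qed.

Lemma continuous_on_closed_sub_linear (f : R -> R) (m a b : R) :
  continuous_on_closed f a b -> continuous_on_closed (fun x => f x - m * x) a b.
Proof.
  intros Hf x Hx. apply limit_minus; [now apply Hf |].
  apply (limit_mul (fun _ => m) (fun y => y));
    [apply (limit_free (fun _ => m) _ x) | apply lim_x].
Qed.

Lemma continuous_on_closed_gt_near_right (g : R -> R) (a b p y : R) :
  continuous_on_closed g a b -> a <= p < b -> y < g b ->
  exists w, p < w < b /\ y < g w.
Proof.
  intros Hg Hp Hy.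
  destruct (Hg b ltac:(lra) (g b - y) ltac:(lra)) as [delta [Hdelta_pos Hdelta]].
  set (w := b - Rmin (delta / 2) ((b - p) / 2)).
  assert (Hm_delta : Rmin (delta / 2) ((b - p) / 2) <= delta / 2) by apply Rmin_l.
  assert (Hm_p : Rmin (delta / 2) ((b - p) / 2) <= (b - p) / 2) by apply Rmin_r.
  assert (Hm_pos : 0 < Rmin (delta / 2) ((b - p) / 2)) by (apply Rmin_pos; lra).
  exists w; split; [unfold w; lra |].
  assert (Hdist : R_dist w b < delta).
  { unfold R_dist, w. rewrite Rabs_left; lra. }
  assert (Hw_ab : a <= w <= b) by (unfold w; lra).
  specialize (Hdelta w (conj Hw_ab Hdist)).
  unfold R_dist in Hdelta. apply Rabs_def2 in Hdelta. lra.
Qed.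

Lemma slope_attained_right_of_smaller_slope (a b : R) (f f' : R -> R) (c xic : R) :
  continuous_on_closed f a b ->
  (forall x, a < x < b -> derivable_pt_lim f x (f' x)) ->
  a < xic -> xic < c -> c < b ->
  f' xic = (f c - f a) / (c - a) ->
  f' xic < (f b - f a) / (b - a) ->
  exists xib, xic < xib < b /\ f' xib = (f b - f a) / (b - a).
Proof.
  intros Hf Hf' Ha Hxic Hcb Hslope_c Hlt.
  set (m := (f b - f a) / (b - a)) in *.
  set (g := fun x => f x - m * x).
  assert (Hgc_gb : g c < g b).
  { unfold g.
    assert (Hchord_b : f b - f a = m * (b - a)) by (unfold m; field; lra).
    assert (Hchord_c : f c - f a = f' xic * (c - a)) by (rewrite Hslope_c; field; lra).
    nra. }
  destruct (continuous_on_closed_gt_near_right g a b c (g c)) as [w [Hw Hgw]];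
    [now apply continuous_on_closed_sub_linear | lra | exact Hgc_gb |].
  destruct (deriv_zero_of_interior_dip g (fun x => f' x - m) xic w c)
    as [xib [Hxib Hzero]]; [lra | | lra | exact Hgw |].
  - intros x Hx. replace (f' x - m) with (f' x - m * 1) by ring.
    apply derivable_pt_lim_minus; [apply Hf'; lra |].
    apply derivable_pt_lim_scal, derivable_pt_lim_id.
  - exists xib; split; lra.
Qed.

Theorem theorem6 (a b : R) (f f' : R -> R) (c xic : R) :
  a < b ->
  continuous_on_closed f a b ->
  (forall x, a < x < b -> derivable_pt_lim f x (f' x)) ->
  a < xic -> xic < c -> c < b ->
  f' xic = (f c - f a) / (c - a) ->
  exists xib, xic <= xib < b /\ f' xib = (f b - f a) / (b - a).
Proof.
  intros Hab Hf Hf' Ha Hxic Hcb Hslope_c.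
  assert (Hopp_slope : forall u v, v <> 0 -> (- f u - - f a) / v = - ((f u - f a) / v))
    by (intros u v Hv; field; exact Hv).
  destruct (Rtotal_order (f' xic) ((f b - f a) / (b - a))) as [Hlt | [Heq | Hgt]].
  - destruct (slope_attained_right_of_smaller_slope a b f f' c xic) as [xib [Hx Hs]];
      try assumption.
    exists xib; split; [lra | exact Hs].
  - exists xic; split; [lra | exact Heq].
  - destruct (slope_attained_right_of_smaller_slope a b (fun x => - f x) (fun x => - f' x) c xic)
      as [xib [Hx Hs]].
    + now apply continuous_on_closed_opp.
    + intros x Hx. apply (derivable_pt_lim_opp f). now apply Hf'.
    + exact Ha.
    + exact Hxic.
    + exact Hcb.
    + rewrite Hopp_slope by lra. lra.
    + rewrite Hopp_slope by lra. lra.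
    + exists xib; split; [lra |].
      rewrite Hopp_slope in Hs by lra. lra.
Qed.
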